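(* Let the data vector $S\in\mathbb{R}^d$ have Gaussian density \[ f(s\mid\beta^* )=(2\pi)^{-d/2}|\Sigma_f|^{-1/2}\exp\!\big(-(s-\mu(\beta^* ))^T\Sigma_f^{-1}(s-\mu(\beta^* ))/2\big), \] with differentiable mean map $\mu:\mathbb{R}^k\to\mathbb{R}^d$ and positive definite $\Sigma_f$, and let $\pi$ be a differentiable prior density on $\beta^*\in\mathbb{R}^k$. Let $D\in\mathbb{R}^{p\times d}$, $P\in\mathbb{R}^{p\times p}$, $q\in\mathbb{R}^p$, let $\Lambda_g^*$ be the convex conjugate of the log-MGF of the randomization, and let $b_{\mathcal{R}_O}$ be a barrier function on the constraint set $\mathcal{R}_O\subset\mathbb{R}^p$. Define the approximate log-normalizer \[ \log\hat{\mathbb{P}}(\beta^* )=-\inf_{s\in\mathbb{R}^d,\,o\in\mathbb{R}^p}\Big\{\tfrac12(s-\mu(\beta^* ))^T\Sigma_f^{-1}(s-\mu(\beta^* ))+\Lambda_g^*(Ds+Po+q)+b_{\mathcal{R}_O}(o)\Big\} \] and the pseudo selective posterior $\tilde\pi_E(\beta^*\mid s)\propto\pi(\beta^* )f(s\mid\beta^* )/\hat{\mathbb{P}}(\beta^* )$. Then the gradient of $\log\tilde\pi_E(\cdot\mid s)$ at $\beta^{*(K)}$ is \[ \frac{\partial\log\pi(\beta^* )}{\partial\beta^*}\Big|_{\beta^{*(K)}}+\Big(\frac{\partial\mu}{\partial\beta^*}\Big)^T\Big|_{\beta^{*(K)}}\Sigma_f^{-1}\Big\{s-s^*\big(\Sigma_f^{-1}\mu(\beta^{*(K)})\big)\Big\},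 \] where \[ s^*\big(\Sigma_f^{-1}\mu(\beta^* )\big)=\arg\max_{z\in\mathbb{R}^d}\Big(z^T\Sigma_f^{-1}\mu(\beta^* )-\tfrac12 z^T\Sigma_f^{-1}z-\inf_{o\in\mathbb{R}^p}\big\{\Lambda_g^*(Dz+Po+q)+b_{\mathcal{R}_O}(o)\big\}\Big). \]
   Context: The log-MGF of the randomization $\Omega\in\mathbb{R}^p$ is $\Lambda_g(t)=\log\mathbb{E}[\exp(t^T\Omega)]$ and its convex conjugate is $\Lambda_g^*(w)=\sup_t\{t^Tw-\Lambda_g(t)\}$. A barrier function $b_{\mathcal{R}_O}$ is a convex penalty finite on the interior of $\mathcal{R}_O$ and increasing continuously towards its boundary. $\partial\mu/\partial\beta^*$ denotes the $d\times k$ Jacobian of $\mu$. *)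

From HB Require Import structures.
From mathcomp Require Import all_boot all_order all_algebra.
From mathcomp Require Import all_classical all_reals all_analysis.
Set Implicit Arguments. Unset Strict Implicit. Unset Printing Implicit Defensive.
Import Order.TTheory GRing.Theory Num.Theory.
Import numFieldNormedType.Exports.
Local Open Scope classical_set_scope.
Local Open Scope ring_scope.

Section Defs.
Variable R : realType.

Definition quadf n (A : 'M[R]_n) (v : 'cV[R]_n) : R := (v^T *m A *m v) 0 0.

Definition symmetric_mx n (A : 'M[R]_n) : Prop := A^T = A.
Definition posdef_mx n (A : 'M[R]_n) : Prop :=
  symmetric_mx A /\ forall v : 'cV[R]_n, v != 0 -> 0 < quadf A v.

Definition gauss_density d k (mu : 'cV[R]_k -> 'cV[R]_d) (Sigma : 'M[R]_d)
    (s : 'cV[R]_d) (beta : 'cV[R]_k) : R :=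
  (2 * pi) `^ (- (d%:R) / 2) * (\det Sigma) `^ (- (1/2)) *
  expR (- quadf (invmx Sigma) (s - mu beta) / 2).

Definition mgf (dT : measure_display) (T : measurableType dT) p
    (Prob : probability T R) (Omega : T -> 'cV[R]_p) (t : 'cV[R]_p) : \bar R :=
  (\int[Prob]_x (expR ((t^T *m Omega x) 0 0))%:E)%E.

Definition logmgf (dT : measure_display) (T : measurableType dT) p
    (Prob : probability T R) (Omega : T -> 'cV[R]_p) (t : 'cV[R]_p) : \bar R :=
  match mgf Prob Omega t with
  | EFin r => (ln r)%:E
  | _ => +oo%E
  end.

Definition conjugate p (L : 'cV[R]_p -> \bar R) (w : 'cV[R]_p) : \bar R :=
  ereal_sup (range (fun t : 'cV[R]_p => (((t^T *m w) 0 0)%:E - L t)%E)).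

Definition barrier p (RO : set 'cV[R]_p) (b : 'cV[R]_p -> \bar R) : Prop :=
  [/\ (forall o, (interior RO) o -> b o \is a fin_num),
      (forall o, ~ (interior RO) o -> b o = +oo%E),
      (forall (x y : 'cV[R]_p) (l : R), 0 <= l <= 1 ->
          (b (l *: x + (1 - l) *: y)%R <= l%:E * b x + (1 - l)%:E * b y)%E),
      (forall o, (interior RO) o -> {for o, continuous b}) &
      (forall x, closure RO x -> ~ (interior RO) x ->
          b @ within (interior RO) (nbhs x) --> +oo%E)].

Definition hpart d p (Ls : 'cV[R]_p -> \bar R) (b : 'cV[R]_p -> \bar R)
    (D : 'M[R]_(p, d)) (P : 'M[R]_p) (q : 'cV[R]_p) (z : 'cV[R]_d) : \bar R :=
  ereal_inf (range (fun o : 'cV[R]_p => (Ls (D *m z + P *m o + q)%R + b o)%E)).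

Definition logPhat d k p (mu : 'cV[R]_k -> 'cV[R]_d) (Sigma : 'M[R]_d)
    (Ls : 'cV[R]_p -> \bar R) (b : 'cV[R]_p -> \bar R)
    (D : 'M[R]_(p, d)) (P : 'M[R]_p) (q : 'cV[R]_p) (beta : 'cV[R]_k) : \bar R :=
  (- ereal_inf (range (fun s : 'cV[R]_d =>
       ((1/2 * quadf (invmx Sigma) (s - mu beta))%:E + hpart Ls b D P q s)%E)))%E.

Definition sstar_obj d p (Sigma : 'M[R]_d)
    (Ls : 'cV[R]_p -> \bar R) (b : 'cV[R]_p -> \bar R)
    (D : 'M[R]_(p, d)) (P : 'M[R]_p) (q : 'cV[R]_p) (y z : 'cV[R]_d) : \bar R :=
  (((z^T *m y) 0 0 - 1/2 * quadf (invmx Sigma) z)%:E - hpart Ls b D P q z)%E.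

Definition colgrad k (g : 'cV[R]_k -> R) (x : 'cV[R]_k) : 'cV[R]_k :=
  \col_j ('D_(delta_mx j 0 : 'cV[R]_k) g x).

Definition coljacobian d k (f : 'cV[R]_k -> 'cV[R]_d) (x : 'cV[R]_k) : 'M[R]_(d, k) :=
  \matrix_(i < d, j < k) (('D_(delta_mx j 0 : 'cV[R]_k) f x) i 0).

End Defs.

From HB Require Import structures.
From mathcomp Require Import all_boot all_order all_algebra.
From mathcomp Require Import all_classical all_reals all_analysis.
From mathcomp Require Import ring lra.
Import Order.TTheory GRing.Theory Num.Theory.
Import numFieldNormedType.Exports.
Local Open Scope classical_set_scope.
Local Open Scope ring_scope.

Set Implicit Arguments. Unset Strict Implicit. Unset Printing Implicit Defensive.

(* With A := Sigma^-1 and h z := inf_o { Lambda*(D z + P o + q) + b o }, minus the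
   approximate log-normalizer is the Moreau envelope
   V m := inf_z { (z - m)^T A (z - m) / 2 + h z } at m = mu(beta), and sstar attains
   this infimum at m0 = mu(betaK).  A convex conjugate is convex, so h is convex, and
   then V (m0 + u) - V m0 - <A (m0 - sstar), u> lies between -+ u^T A u / 2: the
   upper bound by testing z = sstar, the lower bound by averaging near-minimisers for
   m0 + u and m0 - u, which gives a competitor for m0.  Hence V is differentiable at
   m0 with gradient A (m0 - sstar); adding the gradient A (s - m0) of the Gaussian
   log-likelihood and the chain rule through mu give the formula. *)

Lemma is_diff_quadratic_remainder (R : realType) (V W : normedModType R)
    (f : V -> W) (df : {linear V -> W}) (x : V) (C : R) :
  continuous df -> (forall u, `|f (u + x) - f x - df u| <= C * `|u| ^+ 2) ->
  is_diff x f df.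
Proof.
move=> df_cont remainder.
have f_expansion : f \o shift x = cst (f x) + df +o_ (0 : V) id.
  apply/eqaddoP => e e_gt0; apply/nbhs_norm0P.
  exists (e / (`|C| + 1)) => [|u /= u_small]; first by rewrite /= divr_gt0 ?ltr_wpDl.
  rewrite opprD addrA; apply: (le_trans (remainder u)).
  rewrite expr2 mulrA ler_wpM2r //.
  move: u_small; rewrite ltr_pdivlMr ?ltr_wpDl // => u_small.
  have := ler_norm C; have := normr_ge0 u; nra.
have d_val := diff_unique df_cont f_expansion.
apply: DiffDef => //; apply/diff_locallyP; rewrite d_val; split => //.
Qed.

Lemma entry_norm_le (R : realType) m n (M : 'M[R]_(m, n)) i j : `|M i j| <= `|M|.
Proof.
by rewrite [`|M|]mx_normrE (le_bigmax _ (fun ij : 'I_m * 'I_n => `|M ij.1 ij.2|) (i, j)).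
Qed.

Lemma mulmx_entry_norm_le (R : realType) m n (M : 'M[R]_(m, n)) (v : 'cV[R]_n) i :
  `|(M *m v) i 0| <= (\sum_j `|M i j|) * `|v|.
Proof.
rewrite mxE mulr_suml (le_trans (ler_norm_sum _ _ _)) //.
apply: ler_sum => j _; rewrite normrM ler_wpM2l //.
exact: entry_norm_le.
Qed.

Section InnerProduct.
Variables (R : realType) (n : nat).
Implicit Types (u v w : 'cV[R]_n) (A : 'M[R]_n).

Definition dotv u v : R := (u^T *m v) 0 0.

Fact dotv_is_linear u : linear (dotv u).
Proof. by move=> a v w; rewrite /dotv mulmxDr -scalemxAr !mxE. Qed.

HB.instance Definition _ u :=
  GRing.isLinear.Build R 'cV[R]_n R _ (dotv u) (dotv_is_linear u).

Lemma dotvC u v : dotv u v = dotv v u.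
Proof.
have trmx11 (M : 'M[R]_1) : M 0 0 = M^T 0 0 by rewrite mxE.
by rewrite /dotv trmx11 trmx_mul trmxK.
Qed.

Lemma dotvDl u v w : dotv (u + v) w = dotv u w + dotv v w.
Proof. by rewrite /dotv linearD mulmxDl mxE. Qed.

Lemma dotvZl (a : R) u v : dotv (a *: u) v = a * dotv u v.
Proof. by rewrite /dotv linearZ /= -scalemxAl mxE. Qed.

Lemma dotvNl u v : dotv (- u) v = - dotv u v.
Proof. by rewrite -scaleN1r dotvZl mulN1r. Qed.

Lemma dotv_mulmxl A u v : dotv (A *m u) v = dotv u (A^T *m v).
Proof. by rewrite /dotv trmx_mul mulmxA. Qed.

Lemma quadfE A v : quadf A v = dotv v (A *m v).
Proof. by rewrite /quadf /dotv mulmxA. Qed.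

Lemma dotv_continuous u : continuous (dotv u).
Proof.
apply/(@bounded_linear_continuous _ _ _ (dotv u))/linear_boundedP.
near=> r => v; apply: (le_trans (mulmx_entry_norm_le u^T v 0)).
by under eq_bigr do rewrite mxE; rewrite ler_wpM2r.
Unshelve. all: by end_near. Qed.

Lemma quadf_le_norm A v : quadf A v <= (\sum_i \sum_j `|A i j|) * `|v| ^+ 2.
Proof.
rewrite (le_trans (ler_norm _)) // quadfE /dotv mxE.
rewrite (le_trans (ler_norm_sum _ _ _)) // mulr_suml; apply: ler_sum => i _.
rewrite mxE normrM expr2 mulrA mulrC ler_pM //.
- exact: mulmx_entry_norm_le.
- exact: entry_norm_le.
Qed.

Section Symmetric.
Variable A : 'M[R]_n.
Hypothesis A_sym : A^T = A.

Lemma dotv_sym u v : dotv (A *m u) v = dotv u (A *m v).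
Proof. by rewrite dotv_mulmxl A_sym. Qed.

Lemma quadfD u v : quadf A (u + v) = quadf A u + 2 * dotv (A *m u) v + quadf A v.
Proof.
rewrite !quadfE mulmxDr !linearD /= !dotvDl.
by rewrite [dotv v (A *m u)]dotvC -[dotv u (A *m v)]dotv_sym; ring.
Qed.

Lemma quadfZ (a : R) v : quadf A (a *: v) = a ^+ 2 * quadf A v.
Proof.
by rewrite !quadfE -scalemxAr linearZ /= dotvZl expr2; exact: mulrA.
Qed.

Lemma quadfN v : quadf A (- v) = quadf A v.
Proof. by rewrite -scaleN1r quadfZ sqrrN expr1n mul1r. Qed.

Lemma quadf_convex (l : R) u v : (forall w, 0 <= quadf A w) -> 0 <= l <= 1 ->
  quadf A (l *: u + (1 - l) *: v) <= l * quadf A u + (1 - l) * quadf A v.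
Proof.
move=> A_psd /andP[l_ge0 l_le1].
have -> : l *: u + (1 - l) *: v = v + l *: (u - v).
  by rewrite scalerBl scale1r scalerBr addrCA addrA.
have -> : quadf A u = quadf A (v + (u - v)) by rewrite addrC subrK.
rewrite quadfD [quadf A (v + _)]quadfD quadfZ linearZ /=.
rewrite -[l *: _]/(l * _).
have l_compl : 0 <= 1 - l by rewrite subr_ge0.
have := mulr_ge0 (mulr_ge0 l_ge0 l_compl) (A_psd (u - v)); nra.
Qed.

End Symmetric.
End InnerProduct.

Section ExtendedConvexity.
Variables (R : realType) (n : nat).
Local Open Scope ereal_scope.

Definition econvex (f : 'cV[R]_n -> \bar R) : Prop :=
  forall (l : R) x y (rx ry : R), (0 <= l <= 1)%R -> f x = rx%:E -> f y = ry%:E ->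
    f (l *: x + (1 - l) *: y)%R <= (l * rx + (1 - l) * ry)%:E.

Lemma conjugate_econvex (L : 'cV[R]_n -> \bar R) : econvex (conjugate L).
Proof.
move=> l w1 w2 c1 c2 /andP[l_ge0 l_le1] conj_w1 conj_w2.
apply: ge_ereal_sup => _ [t _ <-] /=.
have affine_le (w : 'cV[R]_n) c : conjugate L w = c%:E ->
    ((t^T *m w) 0 0)%:E - L t <= c%:E.
  by move=> <-; apply: ereal_sup_ubound; exists t.
case Lt: (L t) => [r| |]; last 2 first.
- by rewrite addeNy leNye.
- by have := affine_le _ _ conj_w1; rewrite Lt /= addey.
move: (affine_le _ _ conj_w1) (affine_le _ _ conj_w2).
rewrite Lt -!EFinB !lee_fin mulmxDr -!scalemxAr !mxE.
have : (0 <= 1 - l)%R by rewrite subr_ge0.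
nra.
Qed.

Lemma barrier_econvex (RO : set 'cV[R]_n) (b : 'cV[R]_n -> \bar R) :
  barrier RO b -> econvex b.
Proof.
case=> _ _ b_convex _ _ l x y rx ry l01 bx b_y.
by have := b_convex x y l l01; rewrite bx b_y -!EFinM -EFinD.
Qed.

Lemma barrier_neqNy (RO : set 'cV[R]_n) (b : 'cV[R]_n -> \bar R) :
  barrier RO b -> forall o, b o != -oo.
Proof.
case=> b_fin b_out _ _ _ o; have [/b_fin|/b_out ->] := pselect (interior RO o) => //.
by rewrite fin_numE => /andP[].
Qed.

End ExtendedConvexity.

Section PartialInfimum.
Variables (R : realType) (d p : nat) (D : 'M[R]_(p, d)) (P : 'M[R]_p) (q : 'cV[R]_p).
Variables (Ls b : 'cV[R]_p -> \bar R).
Hypotheses (Ls_convex : econvex Ls) (b_convex : econvex b).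
Hypothesis b_neqNy : forall o, b o != -oo%E.
Local Open Scope ereal_scope.

Lemma hpart_approx z (r e : R) : hpart Ls b D P q z = r%:E -> (0 < e)%R ->
  exists o (x c : R),
    [/\ Ls (D *m z + P *m o + q)%R = x%:E, b o = c%:E & (x + c < r + e)%R].
Proof.
move=> hz e_gt0.
have hz_fin : hpart Ls b D P q z \is a fin_num by rewrite hz.
case: (lb_ereal_inf_adherent e_gt0 hz_fin) => _ [oz _ <-].
rewrite -/(hpart Ls b D P q z) hz => near_inf.
have inf_le : r%:E <= Ls (D *m z + P *m oz + q)%R + b oz.
  by rewrite -hz; apply: ereal_inf_lbound; exists oz.
move: near_inf inf_le (b_neqNy oz).
case Lz: (Ls _) => [x| |]; case bz: (b oz) => [c| |] //= near_inf inf_le _.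
by exists oz, x, c; split => //; rewrite -lte_fin EFinD.
Qed.

Lemma hpart_econvex : econvex (hpart Ls b D P q).
Proof.
move=> l z1 z2 r1 r2 l01 h1 h2; apply/lee_addgt0Pr => e e_gt0.
have [oa [x1 [c1 [Ls1 b1 lt1]]]] := hpart_approx h1 e_gt0.
have [ob [x2 [c2 [Ls2 b2 lt2]]]] := hpart_approx h2 e_gt0.
pose o := (l *: oa + (1 - l) *: ob)%R.
have affine : (D *m (l *: z1 + (1 - l) *: z2) + P *m o + q =
    l *: (D *m z1 + P *m oa + q) + (1 - l) *: (D *m z2 + P *m ob + q))%R.
  by rewrite !mulmxDr -!scalemxAr !scalerDr scalerBl scale1r; apply/matrixP => i j;
    rewrite !mxE; ring.
have inf_le : hpart Ls b D P q (l *: z1 + (1 - l) *: z2)%R <=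
    Ls (l *: (D *m z1 + P *m oa + q) + (1 - l) *: (D *m z2 + P *m ob + q))%R + b o.
  by rewrite -affine; apply: ereal_inf_lbound; exists o.
apply: (le_trans inf_le).
apply: (le_trans (leeD (Ls_convex l01 Ls1 Ls2) (b_convex l01 b1 b2))).
rewrite -!EFinD lee_fin; move: l01 => /andP[l_ge0 l_le1]; nra.
Qed.

End PartialInfimum.

Section MoreauEnvelope.
Variables (R : realType) (n : nat) (A : 'M[R]_n) (h : 'cV[R]_n -> \bar R).
Local Open Scope ereal_scope.

Definition moreau_obj (m z : 'cV[R]_n) : \bar R := (1/2 * quadf A (z - m))%:E + h z.

Definition moreau (m : 'cV[R]_n) : \bar R := ereal_inf (range (moreau_obj m)).

Hypotheses (A_sym : A^T = A) (A_psd : forall v, (0 <= quadf A v)%R).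
Hypothesis h_convex : econvex h.
Variables (m0 zs : 'cV[R]_n).
Hypothesis h_zs : h zs \is a fin_num.
Hypothesis zs_min : forall z, moreau_obj m0 zs <= moreau_obj m0 z.

Let V0 := fine (moreau_obj m0 zs).
Let g := (A *m (m0 - zs))%R.

Let moreau_obj_zs : moreau_obj m0 zs = V0%:E.
Proof. by rewrite /V0 fineK // fin_numD h_zs. Qed.

Lemma moreau_center : moreau m0 = V0%:E.
Proof.
apply/eqP; rewrite eq_le; apply/andP; split.
  by rewrite -moreau_obj_zs; apply: ereal_inf_lbound; exists zs.
by apply/ereal_infP => _ [z _ <-]; rewrite -moreau_obj_zs.
Qed.

Let h_neqNy z : h z != -oo.
Proof.
apply/eqP => hz; have := zs_min z.
by rewrite moreau_obj_zs /moreau_obj hz addeNy leeNy_eq.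
Qed.

Lemma moreau_ub u : moreau (m0 + u) <= (V0 + dotv g u + quadf A u / 2)%:E.
Proof.
apply: ge_ereal_inf; exists (moreau_obj (m0 + u) zs); first by exists zs.
have V0E : V0 = (1/2 * quadf A (zs - m0) + fine (h zs))%R by rewrite /V0 fineD.
rewrite /moreau_obj -(fineK h_zs) -EFinD lee_fin V0E.
have -> : (zs - (m0 + u) = (zs - m0) + - u)%R by rewrite opprD addrA.
rewrite quadfD // quadfN linearN /=.
have -> : (A *m (zs - m0) = - g)%R by rewrite /g -mulmxN opprB.
rewrite dotvNl; lra.
Qed.

Lemma moreau_obj_midpoint u z1 z2 :
  (V0 *+ 2)%:E <= moreau_obj (m0 + u) z1 + moreau_obj (m0 - u) z2.
Proof.
rewrite /moreau_obj.
case h1: (h z1) (h_neqNy z1) => [r1| |] // _.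
all: case h2: (h z2) (h_neqNy z2) => [r2| |] // _.
all: try by rewrite !addey ?leey.
have half01 : (0 <= (1/2 : R) <= 1)%R by apply/andP; split; lra.
pose zm := ((1/2) *: z1 + (1 - 1/2) *: z2)%R.
have zm_obj := le_trans (zs_min zm) (leeD2l _ (h_convex half01 h1 h2)).
rewrite moreau_obj_zs -EFinD lee_fin in zm_obj.
have zm_split : (zm - m0 = (1/2) *: (z1 - (m0 + u)) + (1 - 1/2) *: (z2 - (m0 - u)))%R.
  by apply/matrixP => i j; rewrite !mxE; field.
have := quadf_convex A_sym (z1 - (m0 + u))%R (z2 - (m0 - u))%R A_psd half01.
rewrite -zm_split -!EFinD lee_fin; lra.
Qed.

Lemma moreau_lb u : (V0 + dotv g u - quadf A u / 2)%:E <= moreau (m0 + u).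
Proof.
apply/ereal_infP => _ [z1 _ <-].
case obj1: (moreau_obj (m0 + u) z1) => [r1| |]; last 2 first.
- exact: leey.
- by move: obj1; rewrite /moreau_obj; case: (h z1) (h_neqNy z1).
have lb_neg : ((V0 *+ 2 - r1)%:E <= moreau (m0 - u)).
  apply/ereal_infP => _ [z2 _ <-]; rewrite EFinB leeBlDl //.
  by rewrite -obj1 moreau_obj_midpoint.
have := le_trans lb_neg (moreau_ub (- u)%R).
rewrite !lee_fin quadfN //; rewrite linearN /=; lra.
Qed.

Lemma moreau_taylor u :
  (`|fine (moreau (m0 + u)) - fine (moreau m0) - dotv g u| <= quadf A u / 2)%R.
Proof.
have := moreau_ub u; have := moreau_lb u; rewrite moreau_center /=.
case: (moreau (m0 + u)) => [v| |] //= lb ub.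
by rewrite !lee_fin in lb ub; rewrite ler_norml; apply/andP; split; lra.
Qed.

Lemma is_diff_gauss_moreau (s : 'cV[R]_n) (c : R) :
  is_diff m0 (fun m => c - quadf A (s - m) / 2 + fine (moreau m))%R
    (dotv (A *m (s - zs))).
Proof.
apply: (is_diff_quadratic_remainder (C := \sum_i \sum_j `|A i j|)).
  exact: dotv_continuous.
move=> u; apply: le_trans (quadf_le_norm A u); rewrite [(u + m0)%R]addrC.
have := moreau_taylor u; have := A_psd u.
have -> : (s - (m0 + u) = (s - m0) + - u)%R by rewrite opprD addrA.
have -> : (A *m (s - zs) = A *m (s - m0) + g)%R by rewrite -mulmxDr addrA subrK.
rewrite quadfD // quadfN linearN /= dotvDl => q_ge0 taylor.
rewrite ler_norml; move: taylor; rewrite ler_norml => /andP[]; lra.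
Qed.

End MoreauEnvelope.

Section Gradients.
Variable R : realType.

Lemma colgradD k (f g : 'cV[R]_k -> R) x :
  differentiable f x -> differentiable g x ->
  colgrad (f + g) x = colgrad f x + colgrad g x.
Proof.
by move=> df dg; apply/matrixP => j i; rewrite !mxE deriveD //; exact: diff_derivable.
Qed.

Lemma colgrad_comp d k (mu : 'cV[R]_k -> 'cV[R]_d) (g : 'cV[R]_d -> R) w x :
  differentiable mu x -> is_diff (mu x) g (dotv w) ->
  colgrad (g \o mu) x = (coljacobian mu x)^T *m w.
Proof.
move=> dmu dg; apply/matrixP => j i; rewrite (ord1 i) !mxE.
rewrite deriveE; last exact: differentiable_comp.
rewrite diff_comp // diff_val /dotv /= mxE; apply: eq_bigr => l _.
by rewrite !mxE -deriveE // mulrC.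
Qed.

End Gradients.

Section GaussianModel.
Variables (R : realType) (d : nat) (Sigma : 'M[R]_d).
Hypothesis Sigma_pd : posdef_mx Sigma.

Lemma posdef_det_neq0 : \det Sigma != 0.
Proof.
apply/negP => /det0P [v v_neq0 v_ker].
have := Sigma_pd.2 v^T; rewrite trmx_eq0 => /(_ v_neq0).
by rewrite /quadf trmxK v_ker mul0mx mxE ltxx.
Qed.

Lemma posdef_invmx_sym : (invmx Sigma)^T = invmx Sigma.
Proof. by rewrite trmx_inv Sigma_pd.1. Qed.

Lemma posdef_invmx_psd v : 0 <= quadf (invmx Sigma) v.
Proof.
have Sigma_unit : Sigma \in unitmx by rewrite unitmxE unitfE posdef_det_neq0.
have <- : quadf Sigma (invmx Sigma *m v) = quadf (invmx Sigma) v.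
  rewrite /quadf trmx_mul posdef_invmx_sym !mulmxA -[_ *m Sigma *m _]mulmxA.
  by rewrite mulmxV // mulmx1.
have [->|Av_neq0] := eqVneq (invmx Sigma *m v) 0.
  by rewrite /quadf mulmx0 mxE.
exact/ltW/(Sigma_pd.2 _ Av_neq0).
Qed.

Lemma ln_gauss_density k (mu : 'cV[R]_k -> 'cV[R]_d) s beta :
  ln (gauss_density mu Sigma s beta) =
  ln ((2 * pi) `^ (- (d%:R) / 2) * (\det Sigma) `^ (- (1/2))) -
  quadf (invmx Sigma) (s - mu beta) / 2.
Proof.
have const_gt0 : 0 < (2 * pi) `^ (- (d%:R) / 2) * (\det Sigma) `^ (- (1/2)) :> R.
  apply: mulr_gt0; first by rewrite powR_gt0 // mulr_gt0 // pi_gt0.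
  by rewrite /powR (negbTE posdef_det_neq0) expR_gt0.
by rewrite /gauss_density lnM ?posrE ?expR_gt0 // expRK; congr (_ + _); rewrite mulNr.
Qed.

End GaussianModel.

Section SelectionObjective.
Variables (R : realType) (d p : nat) (Sigma : 'M[R]_d) (Ls b : 'cV[R]_p -> \bar R).
Variables (D : 'M[R]_(p, d)) (P : 'M[R]_p) (q : 'cV[R]_p).
Hypothesis invmx_sym : (invmx Sigma)^T = invmx Sigma.
Local Notation A := (invmx Sigma).
Local Notation h := (hpart Ls b D P q).

Lemma sstar_objE m z :
  sstar_obj Sigma Ls b D P q (A *m m) z =
  ((1/2 * quadf A m)%:E - moreau_obj A h m z)%E.
Proof.
rewrite /sstar_obj /moreau_obj oppeD // addeA -EFinB.
congr (_%:E - _)%E; rewrite -[z - m]/(z + - m) quadfD // quadfN linearN /=.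
rewrite -[(z^T *m (A *m m)) 0 0]/(dotv z (A *m m)) -dotv_sym //; lra.
Qed.

Lemma sstar_argmax_min m zs :
  sstar_obj Sigma Ls b D P q (A *m m) zs \is a fin_num ->
  (forall z, (sstar_obj Sigma Ls b D P q (A *m m) z <=
              sstar_obj Sigma Ls b D P q (A *m m) zs)%E) ->
  h zs \is a fin_num /\ forall z, (moreau_obj A h m zs <= moreau_obj A h m z)%E.
Proof.
rewrite sstar_objE fin_numB /= fin_numD /= => zs_fin zs_max; split=> // z.
by have := zs_max z; rewrite !sstar_objE leeD2lE // leeN2.
Qed.

End SelectionObjective.

Unset Implicit Arguments.

Theorem theorem4 (R : realType) (d k p : nat)
  (dT : measure_display) (T : measurableType dT) (Prob : probability T R)
  (Omega : T -> 'cV[R]_p)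
  (hOmega : forall i, measurable_fun setT (fun x => Omega x i 0))
  (mu : 'cV[R]_k -> 'cV[R]_d) (Sigma : 'M[R]_d) (prior : 'cV[R]_k -> R)
  (D : 'M[R]_(p, d)) (P : 'M[R]_p) (q : 'cV[R]_p)
  (RO : set 'cV[R]_p) (b : 'cV[R]_p -> \bar R)
  (s : 'cV[R]_d) (betaK : 'cV[R]_k) (sstar : 'cV[R]_d) :
  (forall beta, differentiable mu beta) ->
  posdef_mx Sigma ->
  (forall beta, 0 <= prior beta) ->
  (forall beta, differentiable prior beta) ->
  0 < prior betaK ->
  barrier RO b ->
  let Ls := conjugate (logmgf Prob Omega) in
  let y := invmx Sigma *m mu betaK in
  (* sstar is the argmax (with a finite maximum) defining s^*(Sigma^-1 mu(betaK)) *)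
  sstar_obj Sigma Ls b D P q y sstar \is a fin_num ->
  (forall z, (sstar_obj Sigma Ls b D P q y z <= sstar_obj Sigma Ls b D P q y sstar)%E) ->
  let logpost := fun beta : 'cV[R]_k =>
    ln (prior beta) + ln (gauss_density mu Sigma s beta)
    - fine (logPhat mu Sigma Ls b D P q beta) in
  differentiable logpost betaK /\
  colgrad logpost betaK =
    colgrad (fun beta => ln (prior beta)) betaK
    + (coljacobian mu betaK)^T *m invmx Sigma *m (s - sstar).
Proof.
move=> mu_diff Sigma_pd _ prior_diff prior_gt0 b_barrier Ls y sstar_fin sstar_max logpost.
set A := invmx Sigma; set h := hpart Ls b D P q.
have A_sym : A^T = A := posdef_invmx_sym Sigma_pd.
have h_convex : econvex h := hpart_econvex (@conjugate_econvex _ _ _)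
  (barrier_econvex b_barrier) (barrier_neqNy b_barrier).
have [h_sstar sstar_min] := sstar_argmax_min A_sym sstar_fin sstar_max.
set c := ln ((2 * pi) `^ (- (d%:R) / 2) * (\det Sigma) `^ (- (1/2))) : R.
pose Psi m := c - quadf A (s - m) / 2 + fine (moreau A h m).
have logpostE : logpost = (fun beta => ln (prior beta)) + (Psi \o mu).
  apply/funext => beta; rewrite /logpost ln_gauss_density // /logPhat fineN opprK.
  by rewrite /Psi !fctE /= [RHS]addrA.
have Psi_diff : is_diff (mu betaK) Psi (dotv (A *m (s - sstar))) :=
  is_diff_gauss_moreau A_sym (posdef_invmx_psd Sigma_pd) h_convex h_sstar sstar_min s c.
have lnprior_diff : differentiable (fun beta => ln (prior beta)) betaK.
  apply: differentiable_comp => //; apply/derivable1_diffP.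
  by have [] := is_derive1_ln prior_gt0.
have Psimu_diff : differentiable (Psi \o mu) betaK by apply: differentiable_comp.
rewrite logpostE; split; first exact: differentiableD.
by rewrite colgradD // (colgrad_comp (mu_diff betaK) Psi_diff) mulmxA.
Qed.
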